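(* Let $q$ be a prime power, let $1 \le k \le n$ be integers, and let $S \subseteq \mathcal{L}_{n,k}$. If $\mu_k(S) = (1+z)^{-1}$ where $z \in \mathbb{R}_{\ge 0}$, then \[ \mu_{k-1}(\partial S) \ge \left(1+ \frac{q(q^{k-1}-1)(q^{n-k}-1)} {(q^k-1)(q^{n-k+1}-1)} \cdot z \right)^{-1} \ge \left(1+\frac{z}{q}\right)^{-1}. \]
   Context: $\mathbb{F}_q$ is the finite field with $q$ elements. $\mathcal{L}_{n,k}$ denotes the set of $k$-dimensional linear subspaces of $(\mathbb{F}_q)^n$. For $S \subseteq \mathcal{L}_{n,k}$, $\mu_k(S) = |S|/|\mathcal{L}_{n,k}|$. For $1 \le k \le n$ and $S \subseteq \mathcal{L}_{n,k}$, the shadow of $S$ is $\partial S = \{B \in \mathcal{L}_{n,k-1} : \exists A \in S,\ B \subset A\}$, and $\mu_{k-1}(\partial S) = |\partial S|/|\mathcal{L}_{n,k-1}|$. *)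

From HB Require Import structures.
From mathcomp Require Import all_boot all_order all_algebra all_field.
Set Implicit Arguments. Unset Strict Implicit. Unset Printing Implicit Defensive.
Import Order.TTheory GRing.Theory Num.Theory.

(* Subspaces of F^n are represented by {vspace 'rV[F]_n}; over a finite field
   this type is finite (subtype of square matrices). *)
Import VectorInternalTheory.
HB.instance Definition _ (F : finFieldType) (n : nat) :=
  [Countable of {vspace 'rV[F]_n} by <:].
HB.instance Definition _ (F : finFieldType) (n : nat) :=
  [Finite of {vspace 'rV[F]_n} by <:].

Definition Lnk (F : finFieldType) (n k : nat) : {set {vspace 'rV[F]_n}} :=
  [set U : {vspace 'rV[F]_n} | \dim U == k].

Definition mu (R : realFieldType) (F : finFieldType) (n k : nat)
  (S : {set {vspace 'rV[F]_n}}) : R :=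
  (#|S|%:R / #|Lnk F n k|%:R)%R.

Definition shadow (F : finFieldType) (n k : nat) (S : {set {vspace 'rV[F]_n}})
  : {set {vspace 'rV[F]_n}} :=
  [set B in Lnk F n k.-1 | [exists A in S, (B <= A)%VS]].

From HB Require Import structures.
From mathcomp Require Import all_boot all_order all_algebra all_field.
From mathcomp Require Import zify ring lra.
Import Order.TTheory GRing.Theory Num.Theory.

(** Let U_j = [up j] and D_j = [down j] map real functions on L_j to functions
    on L_(j+1) and back, by summing over the subspaces below, resp. above, a
    given one; they are adjoint.  Double counting gives the commutation relation
      |U_(j+1) f|^2 = |D_j f|^2 + ([n-j-1]_q - [j+1]_q) |f|^2,
    from which induction on j yields |D_j h|^2 <= nu_j |h|^2 for every h of mean
    zero, with nu_j = q [j]_q [n-j-1]_q.  Apply this to the centred indicator of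
    S: the function D_j 1_S is supported on the shadow and sums to [j+1]_q |S|,
    so Cauchy-Schwarz gives ([j+1]_q |S|)^2 <= |dS| |D_j 1_S|^2, which rearranges
    to the first bound.  The second one is [m+1]_q >= q [m]_q. *)

Set Implicit Arguments. Unset Strict Implicit. Unset Printing Implicit Defensive.
Local Open Scope ring_scope.

Lemma double_count (I J : finType) (X : {set I}) (Y : {set J}) (r : I -> J -> bool) :
  (\sum_(i in X) #|[set j in Y | r i j]| = \sum_(j in Y) #|[set i in X | r i j]|)%N.
Proof.
transitivity (\sum_(i in X) \sum_(j in Y) (r i j : nat))%N.
  by apply: eq_bigr => i _; rewrite -sum1_card big_mkcond [RHS]big_mkcond;
     apply: eq_bigr => j _; rewrite inE; case: (j \in Y); case: (r i j).
rewrite exchange_big; apply: eq_bigr => j _.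
by rewrite -sum1_card big_mkcond [RHS]big_mkcond;
   apply: eq_bigr => i _; rewrite inE; case: (i \in X); case: (r i j).
Qed.

Section SubspaceCounting.
Variables (F : finFieldType) (n : nat).
Local Notation T := {vspace 'rV[F]_n}.
Local Notation q := #|F|.

Lemma card_vspaceD (W U : T) : (W <= U)%VS ->
  #|[set v | (v \in U) && (v \notin W)]| = (q ^ \dim U - q ^ \dim W)%N.
Proof.
move=> sWU; rewrite -!card_vspace -(cardID W U).
have -> : #|[predI U & W]| = #|W|.
  by apply: eq_card => x; rewrite !inE andb_idl // => /(subvP sWU).
by rewrite addKn; apply: eq_card => x; rewrite !inE andbC.
Qed.

Lemma dimv_add_line (W : T) v : v \notin W -> \dim (W + <[v]>) = (\dim W).+1.
Proof.
move=> vW; have v0 : v != 0 by apply: contraNneq vW => ->; rewrite mem0v.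
rewrite dimv_disjoint_sum ?dim_vline ?v0 ?addn1 //.
apply/eqP; rewrite -subv0; apply/subvP => x /memv_capP[xW /vlineP[k def_x]].
rewrite memv0; apply: contraNT vW => x0.
have k0 : k != 0 by apply: contraNneq x0 => k0; rewrite def_x k0 scale0r.
by rewrite -[v](scalerK k0) -def_x memvZ.
Qed.

Definition subspaces_between (W V : T) m :=
  [set U : T | [&& \dim U == m, (W <= U)%VS & (U <= V)%VS]].

Local Notation covers W V := (subspaces_between W V (\dim W).+1).
Local Notation hyperplanes W V := (subspaces_between W V (\dim V).-1).

Lemma covers_through (W V : T) v : (W <= V)%VS -> v \in V -> v \notin W ->
  [set U in covers W V | v \in U] = [set (W + <[v]>)%VS].
Proof.
move=> sWV vV vW; apply/setP => U; rewrite !inE; apply/idP/idP.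
  case/andP => /and3P[/eqP dU sWU _] vU.
  by rewrite eq_sym eqEdim subv_add sWU -memvE vU dU dimv_add_line //=.
move/eqP->; rewrite dimv_add_line // eqxx addvSl subv_add sWV -memvE vV.
by rewrite (subvP (addvSr W <[v]>)) ?memv_line.
Qed.

Lemma card_covers (W V : T) : (W <= V)%VS ->
  (#|covers W V| * (q - 1) = q ^ (\dim V - \dim W) - 1)%N.
Proof.
move=> sWV; set Y := [set v | (v \in V) && (v \notin W)].
have points_of_cover U :
    U \in covers W V -> #|[set v in Y | v \in U]| = (q ^ \dim W * (q - 1))%N.
  rewrite inE => /and3P[/eqP dU sWU sUV].
  rewrite mulnBr muln1 -expnSr -dU -(card_vspaceD sWU).
  apply: eq_card => v; rewrite /Y !inE.
  by case vU: (v \in U); rewrite ?andbT ?andbF ?(subvP sUV _ vU).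
have cover_of_point v : v \in Y -> #|[set U in covers W V | v \in U]| = 1%N.
  by rewrite inE => /andP[vV vW]; rewrite covers_through ?cards1.
have := double_count (covers W V) Y (fun U v => v \in U).
rewrite (eq_bigr _ points_of_cover) (eq_bigr _ cover_of_point) sum_nat_const sum1_card.
rewrite card_vspaceD // -{1}(subnKC (dimvS sWV)) expnD.
have : (0 < q ^ \dim W)%N by rewrite expn_gt0 ltnW ?card_finNzRing_gt1.
nia.
Qed.

(* Induction on dim V - dim W, double counting the flags W < U <= B < V. *)
Lemma card_hyperplanes (W V : T) : (W <= V)%VS -> (\dim W < \dim V)%N ->
  #|hyperplanes W V| = #|covers W V|.
Proof.
move=> sWV ltWV; have [d dimV] : exists d, \dim V = (\dim W + d.+1)%N.
  by exists (\dim V - \dim W).-1; lia.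
have q_gt1 := card_finNzRing_gt1 F.
elim: d W sWV {ltWV} dimV => [|d IHd] W sWV dimV.
  have -> : hyperplanes W V = [set W].
    apply/setP => U; rewrite !inE dimV addn1 /=; apply/idP/idP.
      by case/and3P => /eqP dimU sWU _; rewrite eq_sym eqEdim sWU dimU /=.
    by move/eqP->; rewrite eqxx subvv sWV.
  apply/eqP; rewrite cards1 -(eqn_pmul2r (_ : 0 < q - 1)%N) ?subn_gt0 //.
  by rewrite card_covers // dimV addKn expn1 mul1n.
have count_gt0 : (0 < q ^ d.+1 - 1)%N.
  by rewrite subn_gt0 -{1}(expn0 q) ltn_exp2l.
have covers_below B : B \in hyperplanes W V ->
    (#|[set U in covers W V | (U <= B)%VS]| * (q - 1) = q ^ d.+1 - 1)%N.
  rewrite inE => /and3P[/eqP dimB sWB sBV].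
  have -> : [set U in covers W V | (U <= B)%VS] = covers W B.
    apply/setP => U; rewrite !inE.
    case sUB: (U <= B)%VS; rewrite ?andbT ?andbF //.
    by rewrite (subv_trans sUB sBV) andbT.
  by rewrite card_covers // dimB dimV; congr (_ ^ _ - _)%N; lia.
have hyperplanes_above U : U \in covers W V ->
    (#|[set B in hyperplanes W V | (U <= B)%VS]| * (q - 1) = q ^ d.+1 - 1)%N.
  rewrite inE => /and3P[/eqP dimU sWU sUV].
  have -> : [set B in hyperplanes W V | (U <= B)%VS] = hyperplanes U V.
    apply/setP => B; rewrite !inE.
    case sUB: (U <= B)%VS; rewrite ?andbT ?andbF //.
    by rewrite (subv_trans sWU sUB).
  rewrite IHd ?card_covers ?dimU ?dimV //; first by congr (_ ^ _ - _)%N; lia.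
  by rewrite addSnnS.
have := double_count (hyperplanes W V) (covers W V) (fun B U => (U <= B)%VS).
move/(congr1 (muln^~ (q - 1)%N)); rewrite !big_distrl /=.
rewrite (eq_bigr _ covers_below) (eq_bigr _ hyperplanes_above) !sum_nat_const.
by move/eqP; rewrite eqn_pmul2r // => /eqP.
Qed.
End SubspaceCounting.

Lemma exchange_big_card (V : nmodType) (I J : finType) (X : {set I}) (Y : {set J})
    (r : J -> I -> bool) (g : J -> V) :
  \sum_(i in X) \sum_(j in Y | r j i) g j = \sum_(j in Y) g j *+ #|[set i in X | r j i]|.
Proof.
rewrite (exchange_big_dep (fun j => j \in Y)) => [|i j _ /andP[] //]; apply: eq_bigr => j Yj.
by rewrite Yj -sumr_const; apply: eq_bigl => i; rewrite inE.
Qed.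

Lemma sum_sqr_big_card (R : pzSemiRingType) (I J : finType) (X : {set I}) (Y : {set J})
    (r : J -> I -> bool) (f : J -> R) :
  \sum_(i in X) (\sum_(j in Y | r j i) f j) ^+ 2 =
  \sum_(j in Y) \sum_(j' in Y) f j * f j' *+ #|[set i in X | r j i && r j' i]|.
Proof.
have sqr_sum i : (\sum_(j in Y | r j i) f j) ^+ 2 =
    \sum_(j in Y) \sum_(j' in Y | r j i && r j' i) f j * f j'.
  rewrite expr2 big_distrlr /= big_mkcondr /=; apply: eq_bigr => j _.
  by case: (r j i) => //=; rewrite big1 // => j' /andP[].
under eq_bigr do rewrite sqr_sum.
rewrite exchange_big; apply: eq_bigr => j _.
exact: (exchange_big_card X Y (fun j' i => r j i && r j' i)).
Qed.

Lemma sqr_sum_mul_le (R : realFieldType) (I : finType) (P : pred I) (a b : I -> R) :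
  (\sum_(i | P i) a i * b i) ^+ 2 <=
  (\sum_(i | P i) a i ^+ 2) * (\sum_(i | P i) b i ^+ 2).
Proof.
set A := \sum_(i | P i) a i ^+ 2; set B := \sum_(i | P i) b i ^+ 2.
set C := \sum_(i | P i) a i * b i.
have B_ge0 : 0 <= B by apply: sumr_ge0 => i _; exact: sqr_ge0.
have [B0 | B_neq0] := eqVneq B 0.
  have b0 i : P i -> b i = 0.
    move=> Pi; apply/eqP; rewrite -sqrf_eq0; apply/eqP.
    exact: (psumr_eq0P (fun i _ => sqr_ge0 (b i)) B0).
  by rewrite /C big1 => [|i Pi]; rewrite ?b0 ?mulr0 // B0 expr0n mulr0.
have B_gt0 : 0 < B by rewrite lt_def B_neq0 B_ge0.
have : 0 <= \sum_(i | P i) (a i - C / B * b i) ^+ 2.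
  by apply: sumr_ge0 => i _; exact: sqr_ge0.
have -> : \sum_(i | P i) (a i - C / B * b i) ^+ 2 = A - C ^+ 2 / B.
  rewrite [RHS](_ : _ = A - 2 * (C / B) * C + (C / B) ^+ 2 * B); last by field.
  rewrite /A /B /C !mulr_sumr -sumrB -big_split /=.
  by apply: eq_bigr => i _; ring.
by rewrite subr_ge0 ler_pdivrMr.
Qed.

Lemma density_ge_of_counts (R : realFieldType) (a b Nk Nj gk G nu z : R) :
  0 < Nk -> 0 < gk -> 0 < G -> 0 <= nu -> 0 <= z -> 0 <= b ->
  Nj * G = gk * Nk -> a / Nk = (1 + z)^-1 ->
  (gk * a) ^+ 2 <= b * (nu * (a - a ^+ 2 / Nk) + (gk * a) ^+ 2 / Nj) ->
  (1 + nu / (gk * G) * z)^-1 <= b / Nj.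
Proof.
move=> Nk_gt0 gk_gt0 G_gt0 nu_ge0 z_ge0 b_ge0 NjG def_x ineq.
have z1_gt0 : 0 < 1 + z by rewrite ltr_pwDl.
have z1_neq0 := lt0r_neq0 z1_gt0.
have Nk_neq0 := lt0r_neq0 Nk_gt0; have gk_neq0 := lt0r_neq0 gk_gt0.
have G_neq0 := lt0r_neq0 G_gt0.
have def_Nj : Nj = gk * Nk / G by rewrite -NjG mulfK.
have def_a : a = Nk / (1 + z) by rewrite -[a](divfK Nk_neq0) def_x mulrC.
have Nj_gt0 : 0 < Nj by rewrite def_Nj divr_gt0 ?mulr_gt0.
have c1_gt0 : 0 < 1 + nu / (gk * G) * z.
  by rewrite ltr_pwDl // mulr_ge0 // divr_ge0 // ltW ?mulr_gt0.
rewrite ler_pdivlMr // -(ler_pM2l c1_gt0) mulrA mulfV ?lt0r_neq0 // mul1r.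
pose K := gk * G * Nk / (1 + z) ^+ 2.
have K_gt0 : 0 < K by rewrite /K divr_gt0 ?exprn_gt0 ?mulr_gt0.
rewrite -(ler_pM2l K_gt0).
have -> : K * Nj = (gk * a) ^+ 2.
  by rewrite /K def_Nj def_a; field; rewrite z1_neq0 G_neq0.
have -> : K * ((1 + nu / (gk * G) * z) * b) =
    b * (nu * (a - a ^+ 2 / Nk) + (gk * a) ^+ 2 / Nj).
  by rewrite /K def_Nj def_a; field; rewrite z1_neq0 G_neq0 Nk_neq0 gk_neq0.
exact: ineq.
Qed.

Section ShadowBound.
Variables (R : realFieldType) (F : finFieldType) (n : nat).
Local Notation T := {vspace 'rV[F]_n}.
Local Notation L := (Lnk F n).
Local Notation q := (#|F|%:R : R).

Definition qnum (m : nat) : R := (q ^+ m - 1) / (q - 1).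

Lemma card_field_gt1R : 1 < q.
Proof. by rewrite ltr1n card_finNzRing_gt1. Qed.

Lemma card_field_subr1_neq0 : q - 1 != 0.
Proof. by rewrite subr_eq0 gt_eqF ?card_field_gt1R. Qed.

Lemma qnum_ge0 m : 0 <= qnum m.
Proof.
have q_gt1 := card_field_gt1R.
by rewrite divr_ge0 // subr_ge0 ?(ltW q_gt1) // exprn_ege1 // ltW.
Qed.

Lemma qnum_gt0 m : (0 < m)%N -> 0 < qnum m.
Proof.
have q_gt1 := card_field_gt1R.
by move=> m_gt0; rewrite divr_gt0 // subr_gt0 // exprn_egt1 // -lt0n m_gt0.
Qed.

Lemma natr_qnum x m : (x * (#|F| - 1) = #|F| ^ m - 1)%N -> x%:R = qnum m.
Proof.
have q_gt1 := card_finNzRing_gt1 F.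
move/(congr1 (fun k => k%:R : R)); rewrite natrM !natrB ?expn_gt0 ?(ltnW q_gt1) //.
by rewrite natrX => def_x; rewrite /qnum -def_x mulfK ?card_field_subr1_neq0.
Qed.

Lemma dimv_full : \dim (fullv : T) = n.
Proof. by rewrite dimvf /dim /= mul1n. Qed.

Lemma card_supspaces j (A : T) : A \in L j ->
  #|[set C in L j.+1 | (A <= C)%VS]|%:R = qnum (n - j).
Proof.
rewrite inE => /eqP dimA; apply: natr_qnum.
rewrite -[in RHS]dimv_full -[in RHS]dimA -card_covers ?subvf //.
congr (_ * _)%N; apply: eq_card => C.
by rewrite !inE dimA subvf andbT.
Qed.

Lemma card_subspaces j (A : T) : A \in L j.+1 ->
  #|[set B in L j | (B <= A)%VS]|%:R = qnum j.+1.
Proof.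
rewrite inE => /eqP dimA; apply: natr_qnum.
have := card_covers (sub0v A).
rewrite -card_hyperplanes ?sub0v ?dimv0 ?subn0 ?dimA // => <-.
by congr (_ * _)%N; apply: eq_card => B; rewrite !inE sub0v.
Qed.

Lemma card_supspaces_dim_geq (U : T) m : (m <= \dim U)%N ->
  #|[set C in L m | (U <= C)%VS]| = (\dim U == m).
Proof.
move=> le_m_U; case: eqP => [dimU | neq_m_U].
  apply: etrans (cards1 U); apply: eq_card => C; rewrite !inE.
  apply/idP/idP => [/andP[/eqP dimC sUC] | /eqP->]; last by rewrite dimU eqxx subvv.
  by rewrite eq_sym eqEdim sUC dimC dimU /=.
apply/eqP; rewrite cards_eq0; apply/eqP/setP => C; rewrite !inE.
apply/negbTE/andP => -[/eqP dimC sUC]; apply: neq_m_U.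
by apply/eqP; rewrite eqn_leq le_m_U -dimC dimvS.
Qed.

Lemma card_subspaces_dim_leq (U : T) m : (\dim U <= m)%N ->
  #|[set B in L m | (B <= U)%VS]| = (\dim U == m).
Proof.
move=> le_U_m; case: eqP => [dimU | neq_m_U].
  apply: etrans (cards1 U); apply: eq_card => B; rewrite !inE.
  apply/idP/idP => [/andP[/eqP dimB sBU] | /eqP->]; last by rewrite dimU eqxx subvv.
  by rewrite eqEdim sBU dimB dimU /=.
apply/eqP; rewrite cards_eq0; apply/eqP/setP => B; rewrite !inE.
apply/negbTE/andP => -[/eqP dimB sBU]; apply: neq_m_U.
by apply/eqP; rewrite eqn_leq le_U_m -dimB dimvS.
Qed.

(* Both sides are 1 if dim (A + A') = j + 2, i.e. dim (A :&: A') = j, and 0 otherwise. *)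
Lemma card_common_supspaces j (A A' : T) : A \in L j.+1 -> A' \in L j.+1 -> A != A' ->
  #|[set C in L j.+2 | (A <= C)%VS && (A' <= C)%VS]| =
  #|[set B in L j | (B <= A)%VS && (B <= A')%VS]|.
Proof.
rewrite !inE => /eqP dimA /eqP dimA' neqAA'.
have -> : [set C in L j.+2 | (A <= C)%VS && (A' <= C)%VS] = [set C in L j.+2 | (A + A' <= C)%VS].
  by apply/setP => C; rewrite !inE subv_add.
have -> : [set B in L j | (B <= A)%VS && (B <= A')%VS] = [set B in L j | (B <= A :&: A')%VS].
  by apply/setP => B; rewrite !inE subv_cap.
have dim_sum_cap := dimv_sum_cap A A'; rewrite dimA dimA' in dim_sum_cap.
have lt_A_sum : (j.+1 < \dim (A + A'))%N.
  rewrite ltn_neqAle -dimA dimvS ?addvSl // andbT; apply: contra neqAA' => /eqP dim_sum.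
  have /eqP/addv_idPl sA'A : (A + A' == A)%VS by rewrite eq_sym eqEdim addvSl -dim_sum leqnn.
  by rewrite eq_sym eqEdim sA'A dimA dimA' leqnn.
by rewrite card_supspaces_dim_geq ?card_subspaces_dim_leq; lia.
Qed.

Definition sumL j (f : T -> R) := \sum_(A in L j) f A.
Definition dotL j (f g : T -> R) := \sum_(A in L j) f A * g A.
Definition up j (f : T -> R) C := \sum_(A in L j | (A <= C)%VS) f A.
Definition down j (f : T -> R) B := \sum_(A in L j.+1 | (B <= A)%VS) f A.

Lemma dotL_ge0 j f : 0 <= dotL j f f.
Proof. by apply: sumr_ge0 => A _; rewrite -expr2 sqr_ge0. Qed.

Lemma sqr_dotL_le j f g : dotL j f g ^+ 2 <= dotL j f f * dotL j g g.
Proof.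
have sqrE u : dotL j u u = \sum_(A in L j) u A ^+ 2 by apply: eq_bigr => A _.
by rewrite !sqrE; exact: sqr_sum_mul_le.
Qed.

Lemma dotL_down j g f : dotL j g (down j f) = dotL j.+1 (up j g) f.
Proof.
rewrite /dotL /down /up.
under eq_bigr do rewrite mulr_sumr big_mkcondr /=.
under [RHS]eq_bigr do rewrite mulr_suml big_mkcondr /=.
rewrite exchange_big; apply: eq_bigr => A _; apply: eq_bigr => B _.
by case: (B <= A)%VS; rewrite ?mul0r.
Qed.

Lemma sumL_down j f : sumL j (down j f) = qnum j.+1 * sumL j.+1 f.
Proof.
rewrite /sumL /down (exchange_big_card _ _ (fun A B => (B <= A)%VS)) mulr_sumr.
by apply: eq_bigr => A LA; rewrite -mulr_natr card_subspaces // mulrC.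
Qed.

Lemma down_cst j c B : B \in L j -> down j (fun=> c) B = c * qnum (n - j).
Proof.
move=> LB; rewrite -(card_supspaces LB) mulr_natr -sumr_const.
by apply: eq_bigl => A; rewrite inE.
Qed.

Lemma norm_up_down j f : dotL j.+2 (up j.+1 f) (up j.+1 f) =
  dotL j (down j f) (down j f) + (qnum (n - j.+1) - qnum j.+1) * dotL j.+1 f f.
Proof.
rewrite /dotL /up /down.
under eq_bigr do rewrite -expr2.
under [in RHS]eq_bigr do rewrite -expr2.
rewrite (sum_sqr_big_card (L j.+2) (L j.+1) (fun A C => (A <= C)%VS)).
rewrite (sum_sqr_big_card (L j) (L j.+1) (fun A B => (B <= A)%VS)).
rewrite mulr_sumr -big_split /=; apply: eq_bigr => A LA.
rewrite (bigD1 A) //= (bigD1 A LA) //= addrAC; congr (_ + _); last first.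
  apply: eq_bigr => A' /andP[LA' neqA'A].
  by rewrite card_common_supspaces // eq_sym.
have -> : [set C in L j.+2 | (A <= C)%VS && (A <= C)%VS] = [set C in L j.+2 | (A <= C)%VS].
  by apply/setP => C; rewrite !inE andbb.
have -> : [set B in L j | (B <= A)%VS && (B <= A)%VS] = [set B in L j | (B <= A)%VS].
  by apply/setP => B; rewrite !inE andbb.
rewrite -!(mulr_natr (f A * f A)) card_supspaces // card_subspaces //.
by ring.
Qed.

Definition nu j : R := q * qnum j * qnum (n - j.+1).

Lemma nu_ge0 j : 0 <= nu j.
Proof. by rewrite /nu; apply: mulr_ge0; [apply: mulr_ge0|]; rewrite ?qnum_ge0. Qed.

Lemma nuS j : (j.+1 < n)%N -> nu j + (qnum (n - j.+1) - qnum j.+1) = nu j.+1.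
Proof.
move=> lt_j1_n; have q1_neq0 := card_field_subr1_neq0.
rewrite /nu /qnum (_ : n - j.+1 = (n - j.+2).+1)%N; last by lia.
by rewrite !exprS; field.
Qed.

(* [down j] is adjoint to [up j], so |D h|^2 = <U D h, h> <= |U D h| |h|. *)
Lemma norm_down_le_of_norm_up_le j :
    (forall g, sumL j g = 0 -> dotL j.+1 (up j g) (up j g) <= nu j * dotL j g g) ->
  forall h, sumL j.+1 h = 0 -> dotL j (down j h) (down j h) <= nu j * dotL j.+1 h h.
Proof.
move=> up_le h h0; set g := down j h.
have g0 : sumL j g = 0 by rewrite sumL_down h0 mulr0.
have [->|g_neq0] := eqVneq (dotL j g g) 0; first by rewrite mulr_ge0 ?nu_ge0 ?dotL_ge0.
have g_gt0 : 0 < dotL j g g by rewrite lt_def g_neq0 dotL_ge0.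
have dot_g : dotL j g g = dotL j.+1 (up j g) h by rewrite {2}/g dotL_down.
have : dotL j g g ^+ 2 <= nu j * dotL j g g * dotL j.+1 h h.
  rewrite {1}dot_g; apply: le_trans (sqr_dotL_le _ _ _) _.
  by rewrite ler_wpM2r ?dotL_ge0 ?up_le.
by rewrite expr2 (mulrC (nu j)) -mulrA ler_pM2l.
Qed.

Lemma norm_up_le j : (j < n)%N ->
  forall h, sumL j h = 0 -> dotL j.+1 (up j h) (up j h) <= nu j * dotL j h h.
Proof.
elim: j => [|j IHj] lt_j_n h h0.
  have up0 C : up 0 h C = 0.
    rewrite -[RHS]h0; apply: eq_bigl => A; rewrite inE.
    by case: eqP => // /eqP; rewrite dimv_eq0 => /eqP->; rewrite sub0v.
  have -> : dotL 1 (up 0 h) (up 0 h) = 0 by rewrite /dotL big1 // => C _; rewrite up0 mul0r.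
  by rewrite mulr_ge0 ?nu_ge0 ?dotL_ge0.
rewrite norm_up_down -(nuS lt_j_n) [X in _ <= X]mulrDl lerD2r.
exact: (norm_down_le_of_norm_up_le (IHj (ltnW lt_j_n))).
Qed.

Lemma norm_down_le j h : (j < n)%N -> sumL j.+1 h = 0 ->
  dotL j (down j h) (down j h) <= nu j * dotL j.+1 h h.
Proof. by move=> lt_j_n; apply: norm_down_le_of_norm_up_le; exact: norm_up_le. Qed.

Lemma card_Lnk_mul_qnum j : #|L j|%:R * qnum (n - j) = qnum j.+1 * #|L j.+1|%:R.
Proof.
have := sumL_down j (fun=> 1).
rewrite /sumL (eq_bigr _ (fun B LB => down_cst 1 LB)) !sumr_const => <-.
by rewrite mul1r mulr_natl.
Qed.

Lemma sqr_sumL_le_card j (P : pred T) g :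
    (forall B, B \in L j -> ~~ P B -> g B = 0) ->
  sumL j g ^+ 2 <= #|[set B in L j | P B]|%:R * dotL j g g.
Proof.
move=> g_supp; pose ind B : R := if P B then 1 else 0.
have -> : sumL j g = dotL j ind g.
  apply: eq_bigr => B LB; rewrite /ind.
  by case: ifPn => [_|PB]; rewrite ?mul1r // mul0r g_supp.
have -> : #|[set B in L j | P B]|%:R = dotL j ind ind.
  rewrite /dotL (eq_bigr ind) => [|B _]; last by rewrite /ind; case: (P B); rewrite ?mulr1 ?mulr0.
  by rewrite -big_mkcondr /= -sumr_const; apply: eq_bigl => B; rewrite inE.
exact: sqr_dotL_le.
Qed.

(* Split f into its mean and a part of mean zero; [down j] maps constants to constants. *)
Lemma norm_down_le_variance j f : (j < n)%N -> (0 < #|L j.+1|)%N ->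
  dotL j (down j f) (down j f) <=
    nu j * (dotL j.+1 f f - sumL j.+1 f ^+ 2 / #|L j.+1|%:R)
    + (qnum j.+1 * sumL j.+1 f) ^+ 2 / #|L j|%:R.
Proof.
move=> lt_j_n Lj1_gt0.
set Nk : R := #|L j.+1|%:R; set Nj : R := #|L j|%:R; set G := qnum (n - j).
set s := sumL j.+1 f; set m := s / Nk; pose h A := f A - m.
have Nk_neq0 : Nk != 0 by rewrite pnatr_eq0 -lt0n.
have G_gt0 : 0 < G by rewrite qnum_gt0 // subn_gt0.
have NjG : Nj * G = qnum j.+1 * Nk := card_Lnk_mul_qnum j.
have Nj_neq0 : Nj != 0.
  have : Nj * G != 0 by rewrite NjG mulf_neq0 // lt0r_neq0 ?qnum_gt0.
  by rewrite mulf_eq0 negb_or => /andP[].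
have sum_h : sumL j.+1 h = 0.
  by rewrite /sumL sumrB sumr_const -mulr_natr /m divfK // subrr.
have down_f B : B \in L j -> down j f B = down j h B + m * G.
  move=> LB; rewrite -(down_cst m LB) /down -big_split /=.
  by apply: eq_bigr => A _; rewrite subrK.
have -> : dotL j (down j f) (down j f) = dotL j (down j h) (down j h) + (m * G) ^+ 2 * Nj.
  rewrite /dotL (eq_bigr (fun B => down j h B * down j h B + 2 * (m * G) * down j h B
      + (m * G) ^+ 2)) => [|B LB]; last by rewrite down_f //; ring.
  rewrite !big_split /= -mulr_sumr sumr_const -[_ *+ #|L j|]mulr_natr.
  by rewrite -/(sumL j (down j h)) sumL_down sum_h !mulr0 addr0.
have -> : (qnum j.+1 * s) ^+ 2 / Nj = (m * G) ^+ 2 * Nj.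
  have -> : qnum j.+1 = Nj * G / Nk by rewrite NjG mulfK.
  by rewrite /m; field; rewrite Nk_neq0 Nj_neq0.
have -> : dotL j.+1 f f - s ^+ 2 / Nk = dotL j.+1 h h.
  rewrite [RHS](eq_bigr (fun A => f A * f A - 2 * m * f A + m ^+ 2)) => [|A _]; last first.
    by rewrite /h; ring.
  rewrite big_split sumrB /= -mulr_sumr sumr_const -[_ *+ #|_|]mulr_natr.
  by rewrite -/(dotL j.+1 f f) -/(sumL j.+1 f) -/s -/Nk /m; field.
by rewrite lerD2r norm_down_le.
Qed.

Lemma mu_shadow_ge j (S : {set T}) z : (j < n)%N -> S \subset L j.+1 -> 0 <= z ->
    mu R j.+1 S = (1 + z)^-1 ->
  (1 + nu j / (qnum j.+1 * qnum (n - j)) * z)^-1 <= mu R j (shadow j.+1 S).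
Proof.
move=> lt_j_n sSL z_ge0 muS; pose f A : R := if A \in S then 1 else 0.
have Lj1_gt0 : (0 < #|L j.+1|)%N.
  have muS_neq0 : mu R j.+1 S != 0 by rewrite muS invr_eq0 lt0r_neq0 // ltr_pwDl.
  by rewrite lt0n; apply: contra_neq muS_neq0 => Lj1_0; rewrite /mu Lj1_0 invr0 mulr0.
have sum_f : sumL j.+1 f = #|S|%:R.
  rewrite /sumL -big_mkcondr /= -sumr_const; apply: eq_bigl => A.
  by rewrite andb_idl // => /(subsetP sSL).
have norm_f : dotL j.+1 f f = #|S|%:R.
  by rewrite -sum_f; apply: eq_bigr => A _; rewrite /f; case: ifP; rewrite ?mulr1 ?mulr0.
have down_f_supp B : B \in L j -> ~~ [exists A in S, (B <= A)%VS] -> down j f B = 0.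
  move=> _ /existsPn no_A; apply: big1 => A /andP[_ sBA]; rewrite /f.
  by case: ifPn => // AS; move: (no_A A); rewrite AS sBA.
have := le_trans (sqr_sumL_le_card down_f_supp)
  (ler_wpM2l (ler0n _ _) (norm_down_le_variance f lt_j_n Lj1_gt0)).
rewrite sumL_down norm_f sum_f => counts_ineq.
apply: (density_ge_of_counts _ (qnum_gt0 (ltn0Sn j)) _ (nu_ge0 j) z_ge0 (ler0n _ _)
  (card_Lnk_mul_qnum j) muS counts_ineq); first by rewrite ltr0n.
by rewrite qnum_gt0 // subn_gt0.
Qed.

Lemma qnumS m : qnum m.+1 = 1 + q * qnum m.
Proof.
have q1_neq0 := card_field_subr1_neq0.
by rewrite /qnum exprS; field.
Qed.

Lemma shadow_coef_le j : (j < n)%N -> nu j / (qnum j.+1 * qnum (n - j)) <= q^-1.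
Proof.
move=> lt_j_n; have q_gt0 := lt_trans ltr01 card_field_gt1R.
have den_gt0 : 0 < qnum j.+1 * qnum (n - j) by rewrite mulr_gt0 ?qnum_gt0 ?subn_gt0.
rewrite ler_pdivrMr // -(ler_pM2l q_gt0) mulVKf ?lt0r_neq0 //.
rewrite (_ : n - j = (n - j.+1).+1)%N; last by lia.
rewrite /nu !qnumS; have := qnum_ge0 j; have := qnum_ge0 (n - j.+1); nra.
Qed.

Lemma inv_le_shadow_coef j z : (j < n)%N -> 0 <= z ->
  (1 + z / q)^-1 <= (1 + nu j / (qnum j.+1 * qnum (n - j)) * z)^-1.
Proof.
move=> lt_j_n z_ge0; have q_gt0 := lt_trans ltr01 card_field_gt1R.
set c := nu j / _.
have c_ge0 : 0 <= c by rewrite divr_ge0 ?nu_ge0 // mulr_ge0 ?qnum_ge0.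
have lhs_gt0 : 0 < 1 + z / q by rewrite ltr_pwDl // divr_ge0 // ltW.
have rhs_gt0 : 0 < 1 + c * z by rewrite ltr_pwDl // mulr_ge0.
by rewrite lef_pV2 ?posrE // lerD2l mulrC ler_wpM2l // shadow_coef_le.
Qed.

Lemma shadow_coefE j : (j < n)%N ->
  q * (q ^+ j - 1) * (q ^+ (n - j.+1) - 1) / ((q ^+ j.+1 - 1) * (q ^+ (n - j.+1 + 1) - 1))
  = nu j / (qnum j.+1 * qnum (n - j)).
Proof.
move=> lt_j_n; rewrite addn1 (_ : n - j = (n - j.+1).+1)%N; last by lia.
have q1_neq0 := card_field_subr1_neq0.
have qS_neq0 m : q ^+ m.+1 - 1 != 0.
  by rewrite subr_eq0 eq_sym lt_eqF // exprn_egt1 ?card_field_gt1R.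
by rewrite /nu /qnum; field; rewrite q1_neq0 !qS_neq0.
Qed.
End ShadowBound.

Theorem theorem1 (R : realFieldType) (F : finFieldType) (n k : nat)
  (S : {set {vspace 'rV[F]_n}}) (z : R) :
  (1 <= k)%N -> (k <= n)%N ->
  S \subset Lnk F n k ->
  0 <= z ->
  mu R k S = (1 + z)^-1 ->
  let q : R := #|F|%:R in
  (1 + (q * (q ^+ k.-1 - 1) * (q ^+ (n - k) - 1))
         / ((q ^+ k - 1) * (q ^+ (n - k + 1) - 1)) * z)^-1
    <= mu R k.-1 (shadow k S)
  /\ (1 + z / q)^-1
    <= (1 + (q * (q ^+ k.-1 - 1) * (q ^+ (n - k) - 1))
         / ((q ^+ k - 1) * (q ^+ (n - k + 1) - 1)) * z)^-1.
Proof.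
case: k => [//|j] _ lt_j_n sSL z_ge0 muS q.
rewrite /q shadow_coefE //; split.
  exact: mu_shadow_ge.
exact: inv_le_shadow_coef.
Qed.
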